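(* If $K$ is a smooth convex domain, then its depth satisfies $h_K>0$.
   Context: A convex domain is a compact convex subset $K\subset\mathbb{C}$ with nonempty interior; it is smooth if at each boundary point there is a unique supporting line. A unit vector $\nu$ is an outer normal to $K$ at $\zeta\in\partial K$ if $\mathrm{Re}((z-\zeta)\overline{\nu})\le 0$ for all $z\in K$; then $(\zeta+\nu\mathbb{R})\cap K=[\zeta,\zeta-h\nu]$ with $h\ge0$. The local depth $h_K(\zeta)$ is the maximum of such $h$ over all outer unit normals at $\zeta$, and the depth is $h_K:=\inf_{\zeta\in\partial K}h_K(\zeta)$. *)

(* the complex plane C is modelled as R * R. *)
From Stdlib Require Import Reals.
Open Scope R_scope.

Definition pt := (R * R)%type.

Definition padd (z w : pt) : pt := (fst z + fst w, snd z + snd w).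
Definition psub (z w : pt) : pt := (fst z - fst w, snd z - snd w).
Definition pscal (t : R) (z : pt) : pt := (t * fst z, t * snd z).
(* Re (z * conj w) *)
Definition dot (z w : pt) : R := fst z * fst w + snd z * snd w.
Definition pnorm (z : pt) : R := sqrt (dot z z).
Definition dist (z w : pt) : R := pnorm (psub z w).

Definition interior (K : pt -> Prop) (z : pt) : Prop :=
  exists r, 0 < r /\ forall w, dist w z < r -> K w.
Definition closure (K : pt -> Prop) (z : pt) : Prop :=
  forall r, 0 < r -> exists w, K w /\ dist w z < r.
Definition boundary (K : pt -> Prop) (z : pt) : Prop :=
  closure K z /\ ~ interior K z.

Definition closed_set (K : pt -> Prop) : Prop := forall z, closure K z -> K z.
Definition bounded_set (K : pt -> Prop) : Prop :=
  exists M, forall z, K z -> pnorm z <= M.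
(* compact subset of C = R^2 (Heine-Borel) *)
Definition compact_set (K : pt -> Prop) : Prop := closed_set K /\ bounded_set K.
Definition convex_set (K : pt -> Prop) : Prop :=
  forall z w t, K z -> K w -> 0 <= t <= 1 ->
    K (padd (pscal (1 - t) z) (pscal t w)).

Definition convex_domain (K : pt -> Prop) : Prop :=
  compact_set K /\ convex_set K /\ exists z, interior K z.

Definition outer_normal (K : pt -> Prop) (zeta nu : pt) : Prop :=
  pnorm nu = 1 /\ forall z, K z -> dot (psub z zeta) nu <= 0.

(* smooth: at each boundary point there is a unique supporting line;
   supporting lines at zeta correspond to outer unit normals up to sign *)
Definition smooth (K : pt -> Prop) : Prop :=
  forall zeta, boundary K zeta ->
    forall nu1 nu2, outer_normal K zeta nu1 -> outer_normal K zeta nu2 ->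
      nu1 = nu2 \/ nu1 = pscal (-1) nu2.

Definition chord_length (K : pt -> Prop) (zeta nu : pt) (h : R) : Prop :=
  0 <= h /\ forall t, K (padd zeta (pscal t nu)) <-> (- h <= t <= 0).

Definition local_depth (K : pt -> Prop) (zeta : pt) (h : R) : Prop :=
  (exists nu, outer_normal K zeta nu /\ chord_length K zeta nu h) /\
  (forall nu h', outer_normal K zeta nu -> chord_length K zeta nu h' -> h' <= h).

Definition is_glb (E : R -> Prop) (m : R) : Prop :=
  (forall x, E x -> m <= x) /\ (forall b, (forall x, E x -> b <= x) -> b <= m).

Definition depth (K : pt -> Prop) (d : R) : Prop :=
  is_glb (fun h => exists zeta, boundary K zeta /\ local_depth K zeta h) d.

From Pilot Require Import Defs.
From Stdlib Require Import Reals Lra Lia Psatz Classical ClassicalEpsilon.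
Import Pilot.Defs.
Open Scope R_scope.

(* At a boundary point [zeta] with outer normal [nu], smoothness makes the inner normal ray
   enter the interior: otherwise K lies on one side of the normal line, which would then be a
   second supporting line at [zeta]. Hence every normal chord [[zeta, zeta - h nu]] has [h > 0].
   The chords cannot become arbitrarily short: along a subsequence, boundary points with
   vanishing chords and their normals converge to a boundary point [a] with outer normal [b],
   and a ball around the interior point [a - s b] then contains [zeta_n - s nu_n] for large
   [n]. Smoothness also makes the normal chord the local depth, so the depth is an infimum
   bounded below by a positive constant. *)

Lemma dot_self_ge0 v : 0 <= dot v v.
Proof. unfold dot; nra. Qed.

Lemma pnorm_ge0 v : 0 <= pnorm v.
Proof. apply sqrt_pos. Qed.

Lemma pnorm_sqr v : pnorm v * pnorm v = dot v v.
Proof. apply sqrt_sqrt, dot_self_ge0. Qed.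

Lemma pnorm_unit v : pnorm v = 1 <-> dot v v = 1.
Proof.
  split; intro H.
  - rewrite <- pnorm_sqr, H; ring.
  - unfold pnorm; rewrite H; apply sqrt_1.
Qed.

Lemma pnorm_scal t v : pnorm (pscal t v) = Rabs t * pnorm v.
Proof.
  unfold pnorm. replace (dot (pscal t v) (pscal t v)) with (Rsqr t * dot v v)
    by (unfold dot, pscal, Rsqr; simpl; ring).
  rewrite sqrt_mult by (apply Rle_0_sqr || apply dot_self_ge0).
  now rewrite sqrt_Rsqr_abs.
Qed.

Lemma dist_padd_pscal z t v : dist (padd z (pscal t v)) z = Rabs t * pnorm v.
Proof.
  unfold dist. rewrite <- pnorm_scal. f_equal.
  unfold psub, padd, pscal; simpl; f_equal; ring.
Qed.

Lemma dist_refl z : dist z z = 0.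
Proof.
  unfold dist, pnorm, dot, psub; simpl.
  rewrite !Rminus_diag, Rmult_0_l, Rplus_0_l. apply sqrt_0.
Qed.

(* Cauchy-Schwarz, via Lagrange's identity [(ac+bd)^2 + (ad-bc)^2 = (a^2+b^2)(c^2+d^2)]. *)
Lemma dot_unit_le_pnorm p u : dot u u = 1 -> Rabs (dot p u) <= pnorm p.
Proof.
  intro Hu. pose proof (pnorm_sqr p). pose proof (pnorm_ge0 p).
  assert (Hcs : dot p u * dot p u <= dot p p).
  { destruct p as [a b], u as [c d]; unfold dot in *; simpl in *.
    pose proof (Rle_0_sqr (a*d - b*c)). unfold Rsqr in *.
    replace (a*a + b*b) with ((a*a + b*b) * (c*c + d*d)) by (rewrite Hu; ring).
    assert (E : (a*c + b*d) * (a*c + b*d) + (a*d - b*c) * (a*d - b*c)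
                = (a*a + b*b) * (c*c + d*d)) by ring.
    lra. }
  apply Rabs_le; split; nra.
Qed.

Lemma coord_le_pnorm p : Rabs (fst p) <= pnorm p /\ Rabs (snd p) <= pnorm p.
Proof.
  split.
  - replace (fst p) with (dot p (1, 0)) by (unfold dot; simpl; ring).
    apply dot_unit_le_pnorm; unfold dot; simpl; ring.
  - replace (snd p) with (dot p (0, 1)) by (unfold dot; simpl; ring).
    apply dot_unit_le_pnorm; unfold dot; simpl; ring.
Qed.

Lemma Rabs_le_inv a b : Rabs a <= b -> - b <= a <= b.
Proof. unfold Rabs; destruct (Rcase_abs a); lra. Qed.

Lemma dist_lt_coords w z e :
  Rabs (fst w - fst z) < e -> Rabs (snd w - snd z) < e -> dist w z < 2 * e.
Proof.
  intros H1 H2. apply Rabs_def2 in H1; apply Rabs_def2 in H2.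
  unfold dist, pnorm, dot, psub; simpl.
  set (a := fst w - fst z) in *. set (b := snd w - snd z) in *.
  rewrite <- (sqrt_square (2 * e)) by lra.
  assert (a * a < e * e) by nra. assert (b * b < e * e) by nra.
  apply sqrt_lt_1; nra.
Qed.

Definition pt_cv (u : nat -> pt) (a : pt) : Prop :=
  Un_cv (fun n => fst (u n)) (fst a) /\ Un_cv (fun n => snd (u n)) (snd a).

Lemma inv_succ_cv : Un_cv (fun n => / (INR n + 1)) 0.
Proof. exact RinvN_cv. Qed.

Lemma inv_succ_pos n : 0 < / (INR n + 1).
Proof. apply Rinv_0_lt_compat. pose proof (pos_INR n). lra. Qed.

Lemma inv_succ_small eps : 0 < eps -> exists N, forall n, (N <= n)%nat -> / (INR n + 1) < eps.
Proof.
  intro He. destruct (inv_succ_cv eps He) as [N HN]. exists N. intros n Hn.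
  specialize (HN n Hn). unfold Rdist in HN.
  rewrite Rminus_0_r, Rabs_right in HN by (apply Rle_ge, Rlt_le, inv_succ_pos). exact HN.
Qed.

Lemma Un_cv_eq_const u c : (forall n, u n = c) -> Un_cv u c.
Proof.
  intros Hu eps He. exists 0%nat. intros n _. unfold Rdist.
  rewrite Hu, Rminus_diag, Rabs_R0. exact He.
Qed.

Lemma Un_cv_const c : Un_cv (fun _ => c) c.
Proof. apply Un_cv_eq_const; reflexivity. Qed.

Lemma Un_cv_reindex u l (phi : nat -> nat) :
  Un_cv u l -> (forall k, (k <= phi k)%nat) -> Un_cv (fun k => u (phi k)) l.
Proof.
  intros Hu Hphi eps He. destruct (Hu eps He) as [N HN]. exists N.
  intros n Hn. apply HN. specialize (Hphi n). lia.
Qed.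

Lemma bounded_seq_cv_reindex (u : nat -> R) M : (forall n, Rabs (u n) <= M) ->
  exists (phi : nat -> nat) l, (forall k, (k <= phi k)%nat) /\ Un_cv (fun k => u (phi k)) l.
Proof.
  intro HM.
  destruct (Bolzano_Weierstrass u (fun c => -M <= c <= M) (compact_P3 (-M) M)) as [l Hl].
  { intro n. apply Rabs_le_inv, HM. }
  assert (Hnear : forall k, exists p, (k <= p)%nat /\ Rabs (u p - l) < / (INR k + 1)).
  { intro k. destruct (Hl (disc l (mkposreal _ (inv_succ_pos k))) k) as [p Hp];
      [|exists p; exact Hp].
    exists (mkposreal _ (inv_succ_pos k)). intros x Hx; exact Hx. }
  destruct (choice _ Hnear) as [phi Hphi].
  exists phi, l. split; [intro k; apply Hphi|].
  intros eps He. destruct (inv_succ_small eps He) as [N HN]. exists N. intros n Hn.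
  specialize (HN n Hn). destruct (Hphi n) as [_ Hn']. unfold Rdist. lra.
Qed.

Lemma pt_cv_reindex u a (phi : nat -> nat) :
  pt_cv u a -> (forall k, (k <= phi k)%nat) -> pt_cv (fun k => u (phi k)) a.
Proof.
  intros [H1 H2] Hphi.
  split; [exact (Un_cv_reindex _ _ _ H1 Hphi)|exact (Un_cv_reindex _ _ _ H2 Hphi)].
Qed.

Lemma bounded_pt_seq_cv_reindex (u : nat -> pt) M : (forall n, pnorm (u n) <= M) ->
  exists (phi : nat -> nat) a, (forall k, (k <= phi k)%nat) /\ pt_cv (fun k => u (phi k)) a.
Proof.
  intro HM.
  assert (Hc : forall n, Rabs (fst (u n)) <= M /\ Rabs (snd (u n)) <= M).
  { intro n. pose proof (coord_le_pnorm (u n)) as [H1 H2]. specialize (HM n). lra. }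
  destruct (bounded_seq_cv_reindex (fun n => fst (u n)) M (fun n => proj1 (Hc n)))
    as [phi1 [a1 [Hphi1 C1]]].
  destruct (bounded_seq_cv_reindex (fun k => snd (u (phi1 k))) M (fun n => proj2 (Hc _)))
    as [phi2 [a2 [Hphi2 C2]]].
  exists (fun k => phi1 (phi2 k)), (a1, a2). split; [|split].
  - intro k. specialize (Hphi2 k). specialize (Hphi1 (phi2 k)). lia.
  - exact (Un_cv_reindex _ _ _ C1 Hphi2).
  - exact C2.
Qed.

Lemma pt_cv_padd u v a b : pt_cv u a -> pt_cv v b ->
  pt_cv (fun n => padd (u n) (v n)) (padd a b).
Proof. intros [Hu1 Hu2] [Hv1 Hv2]. split; apply CV_plus; assumption. Qed.

Lemma pt_cv_psub u v a b : pt_cv u a -> pt_cv v b ->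
  pt_cv (fun n => psub (u n) (v n)) (psub a b).
Proof. intros [Hu1 Hu2] [Hv1 Hv2]. split; apply CV_minus; assumption. Qed.

Lemma pt_cv_pscal t u a : pt_cv u a -> pt_cv (fun n => pscal t (u n)) (pscal t a).
Proof. intros [Hu1 Hu2]. split; apply CV_mult; try apply Un_cv_const; assumption. Qed.

Lemma pt_cv_const a : pt_cv (fun _ => a) a.
Proof. split; apply Un_cv_const. Qed.

Lemma dot_cv u v a b : pt_cv u a -> pt_cv v b ->
  Un_cv (fun n => dot (u n) (v n)) (dot a b).
Proof. intros [Hu1 Hu2] [Hv1 Hv2]. apply CV_plus; apply CV_mult; assumption. Qed.

Lemma pt_cv_dist u a r : pt_cv u a -> 0 < r ->
  exists N, forall n, (N <= n)%nat -> dist (u n) a < r.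
Proof.
  intros [H1 H2] Hr.
  destruct (H1 (r/2)) as [N1 HN1]; [lra|]. destruct (H2 (r/2)) as [N2 HN2]; [lra|].
  exists (max N1 N2). intros n Hn.
  replace r with (2 * (r/2)) by field. apply dist_lt_coords; [apply HN1|apply HN2]; lia.
Qed.

Lemma closed_set_limit K u a : closed_set K -> (forall n, K (u n)) -> pt_cv u a -> K a.
Proof.
  intros Hcl Hu Hcv. apply Hcl. intros r Hr.
  destruct (pt_cv_dist u a r Hcv Hr) as [N HN]. exists (u N). split; [apply Hu|apply HN; lia].
Qed.

Lemma interior_in K z : interior K z -> K z.
Proof. intros [r [Hr Hball]]. apply Hball. rewrite dist_refl. exact Hr. Qed.

Lemma in_closure K z : K z -> closure K z.
Proof. intros Kz r Hr. exists z. rewrite dist_refl. auto. Qed.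

(* The ball of radius [t r] around the combination is the image of the ball of radius [r]
   around [c] under the homothety [w |-> (1 - t) p + t w]. *)
Lemma convex_interior_comb K p c t : convex_set K -> K p -> interior K c -> 0 < t <= 1 ->
  interior K (padd (pscal (1 - t) p) (pscal t c)).
Proof.
  intros Hcv Kp [r [Hr Hball]] Ht.
  exists (t * r). split; [nra|]. intros w Hw.
  set (q := padd (pscal (1 - t) p) (pscal t c)) in *.
  set (v := padd c (pscal (/ t) (psub w q))).
  assert (Kv : K v).
  { apply Hball. unfold v. rewrite dist_padd_pscal, Rabs_right
      by (apply Rle_ge, Rlt_le, Rinv_0_lt_compat; lra).
    apply Rmult_lt_reg_l with t; [lra|]. rewrite <- Rmult_assoc, Rinv_r by lra.
    fold (dist w q). lra. }
  replace w with (padd (pscal (1 - t) p) (pscal t v)); [apply Hcv; auto; lra|].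
  unfold v, q, psub, padd, pscal; destruct w, p, c; simpl. f_equal; field; lra.
Qed.

Lemma outer_normal_interior_lt0 K c zeta nu : interior K c -> outer_normal K zeta nu ->
  dot (psub c zeta) nu < 0.
Proof.
  intros [r [Hr Hball]] [Hn Hnu].
  assert (Kc' : K (padd c (pscal (r/2) nu))).
  { apply Hball. rewrite dist_padd_pscal, Hn, Rabs_right by lra. lra. }
  specialize (Hnu _ Kc'). apply pnorm_unit in Hn.
  replace (dot (psub (padd c (pscal (r/2) nu)) zeta) nu)
    with (dot (psub c zeta) nu + r/2 * dot nu nu) in Hnu
    by (unfold dot, psub, padd, pscal; simpl; ring).
  rewrite Hn in Hnu. lra.
Qed.

Lemma outer_normal_boundary K zeta nu : K zeta -> outer_normal K zeta nu -> boundary K zeta.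
Proof.
  intros Kz Hnu. split; [exact (in_closure K zeta Kz)|]. intro Hi.
  pose proof (outer_normal_interior_lt0 K zeta zeta nu Hi Hnu) as Hlt.
  unfold dot, psub in Hlt; simpl in Hlt. lra.
Qed.

Lemma outer_normal_limit K Z V a b : (forall n, outer_normal K (Z n) (V n)) ->
  pt_cv Z a -> pt_cv V b -> outer_normal K a b.
Proof.
  intros HZV HZ HV. split.
  - apply pnorm_unit. apply (UL_sequence (fun n => dot (V n) (V n))); [apply dot_cv; auto|].
    apply Un_cv_eq_const. intro n. apply pnorm_unit, (HZV n).
  - intros z Kz. apply (@Rle_cv_lim (fun n => dot (psub z (Z n)) (V n)) (fun _ => 0)).
    + intro n. apply (proj2 (HZV n)), Kz.
    + apply dot_cv; [apply pt_cv_psub; [apply pt_cv_const|]|]; assumption.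
    + apply Un_cv_const.
Qed.

Lemma smooth_normals_not_orthogonal K zeta nu1 nu2 : smooth K -> boundary K zeta ->
  outer_normal K zeta nu1 -> outer_normal K zeta nu2 -> dot nu1 nu2 <> 0.
Proof.
  intros Hsm Hb H1 H2. pose proof (proj1 (pnorm_unit nu2) (proj1 H2)) as Hn.
  destruct (Hsm zeta Hb nu1 nu2 H1 H2) as [-> | ->];
    unfold dot, pscal in *; simpl in *; lra.
Qed.

Definition rot (v : pt) : pt := (- snd v, fst v).

Lemma sign_change_comb a b : a * b < 0 -> exists t, 0 < t < 1 /\ (1 - t) * a + t * b = 0.
Proof.
  intro Hab. assert (Hd : 0 < (a - b) * (a - b)) by nra.
  exists (a * (a - b) / ((a - b) * (a - b))). split; [split|].
  - apply Rdiv_lt_0_compat; nra.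
  - apply Rmult_lt_reg_r with ((a - b) * (a - b)); [exact Hd|].
    unfold Rdiv. rewrite Rmult_assoc, Rinv_l by lra. nra.
  - field. intro E. assert (a = b) by lra. subst. nra.
Qed.

Lemma normal_line_meets_interior K c zeta nu : convex_set K -> smooth K -> interior K c ->
  boundary K zeta -> outer_normal K zeta nu ->
  exists q, interior K q /\ dot (psub q zeta) (rot nu) = 0.
Proof.
  intros Hcv Hsm Hc Hb Hnu.
  set (X := fun p => dot (psub p zeta) (rot nu)).
  destruct (classic (exists p, K p /\ X p * X c < 0)) as [[p [Kp Hp]]|Hside].
  - destruct (sign_change_comb (X p) (X c) Hp) as [t [Ht Ht0]].
    exists (padd (pscal (1 - t) p) (pscal t c)). split.
    + apply convex_interior_comb; auto; lra.
    + rewrite <- Ht0. unfold X, dot, psub, padd, pscal; simpl; ring.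
  - destruct (Req_dec (X c) 0) as [Hc0|Hc0]; [exists c; auto|]. exfalso.
    assert (Hhalf : forall p, K p -> 0 <= X p * X c).
    { intros p Kp. apply Rnot_lt_le. intro Hlt. apply Hside. eauto. }
    pose proof (proj1 (pnorm_unit nu) (proj1 Hnu)) as Hn.
    destruct (Rlt_or_le 0 (X c)) as [Hpos|Hneg].
    + apply (smooth_normals_not_orthogonal K zeta (pscal (-1) (rot nu)) nu Hsm Hb); auto.
      * split; [apply pnorm_unit; unfold dot, pscal, rot in *; simpl in *; lra|].
        intros z Kz. specialize (Hhalf z Kz).
        assert (0 <= X z) by nra. unfold X, dot, psub, pscal, rot in *; simpl in *; lra.
      * unfold dot, pscal, rot; simpl; ring.
    + apply (smooth_normals_not_orthogonal K zeta (rot nu) nu Hsm Hb); auto.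
      * split; [apply pnorm_unit; unfold dot, rot in *; simpl in *; lra|].
        intros z Kz. specialize (Hhalf z Kz). unfold X in *. nra.
      * unfold dot, rot; simpl; ring.
Qed.

Lemma on_normal_line zeta nu q : dot nu nu = 1 -> dot (psub q zeta) (rot nu) = 0 ->
  q = padd zeta (pscal (dot (psub q zeta) nu) nu).
Proof.
  destruct q as [q1 q2], zeta as [z1 z2], nu as [n1 n2].
  unfold dot, psub, padd, pscal, rot; simpl. intros Hn HX.
  f_equal.
  - transitivity (z1 + (q1 - z1) * (n1 * n1 + n2 * n2)); [rewrite Hn; ring|].
    transitivity (z1 + ((q1 - z1) * n1 + (q2 - z2) * n2) * n1
                  - n2 * ((q1 - z1) * - n2 + (q2 - z2) * n1)); [ring|].
    rewrite HX; ring.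
  - transitivity (z2 + (q2 - z2) * (n1 * n1 + n2 * n2)); [rewrite Hn; ring|].
    transitivity (z2 + ((q1 - z1) * n1 + (q2 - z2) * n2) * n2
                  + n1 * ((q1 - z1) * - n2 + (q2 - z2) * n1)); [ring|].
    rewrite HX; ring.
Qed.

Lemma inner_normal_interior K c zeta nu : convex_set K -> smooth K -> interior K c ->
  boundary K zeta -> outer_normal K zeta nu ->
  exists s, 0 < s /\ interior K (padd zeta (pscal (- s) nu)).
Proof.
  intros Hcv Hsm Hc Hb Hnu.
  destruct (normal_line_meets_interior K c zeta nu Hcv Hsm Hc Hb Hnu) as [q [Hq HX]].
  exists (- dot (psub q zeta) nu). split.
  - pose proof (outer_normal_interior_lt0 K q zeta nu Hq Hnu). lra.
  - rewrite Ropp_involutive, <- on_normal_line; [exact Hq| |exact HX].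
    apply pnorm_unit, Hnu.
Qed.

Lemma glb_exists (E : R -> Prop) b : (exists x, E x) -> (forall x, E x -> b <= x) ->
  exists m, is_glb E m /\ b <= m.
Proof.
  intros [x Ex] Hb.
  destruct (completeness (fun y => E (- y))) as [m [Hub Hlub]].
  - exists (- b). intros y Ey. specialize (Hb _ Ey). lra.
  - exists (- x). rewrite Ropp_involutive. exact Ex.
  - exists (- m). split; [split|].
    + intros y Ey. assert (- y <= m) by (apply Hub; rewrite Ropp_involutive; exact Ey). lra.
    + intros c Hc. assert (m <= - c); [|lra].
      apply Hlub. intros y Ey. specialize (Hc _ Ey). lra.
    + assert (m <= - b); [|lra]. apply Hlub. intros y Ey. specialize (Hb _ Ey). lra.
Qed.

Lemma glb_approx E m r : is_glb E m -> 0 < r -> exists x, E x /\ x < m + r.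
Proof.
  intros [_ Hglb] Hr. apply NNPP. intro Hno. assert (m + r <= m); [|lra].
  apply Hglb. intros x Ex. apply Rnot_lt_le. intro Hlt. apply Hno. eauto.
Qed.

Lemma lub_approx E m r : is_lub E m -> 0 < r -> exists x, E x /\ m - r < x.
Proof.
  intros [_ Hlub] Hr. apply NNPP. intro Hno. assert (m <= m - r); [|lra].
  apply Hlub. intros x Ex. apply Rnot_lt_le. intro Hlt. apply Hno. eauto.
Qed.

Lemma convex_line K zeta nu a b t : convex_set K ->
  K (padd zeta (pscal a nu)) -> K (padd zeta (pscal b nu)) -> a <= t <= b ->
  K (padd zeta (pscal t nu)).
Proof.
  intros Hcv Ka Kb Ht. destruct (Req_dec a b) as [<-|Hab].
  - replace t with a by lra. exact Ka.
  - set (lam := (t - a) / (b - a)).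
    assert (Hlam : 0 <= lam <= 1).
    { unfold lam, Rdiv. split.
      - apply Rmult_le_pos; [lra|]. left; apply Rinv_0_lt_compat; lra.
      - apply Rmult_le_reg_r with (b - a); [lra|]. rewrite Rmult_assoc, Rinv_l; lra. }
    replace (padd zeta (pscal t nu)) with
      (padd (pscal (1 - lam) (padd zeta (pscal a nu))) (pscal lam (padd zeta (pscal b nu)))).
    + apply Hcv; assumption.
    + unfold lam, padd, pscal; simpl; f_equal; field; lra.
Qed.

Lemma chord_length_exists K zeta nu : compact_set K -> convex_set K -> K zeta ->
  outer_normal K zeta nu -> exists h, chord_length K zeta nu h.
Proof.
  intros [Hcl [M HM]] Hcv Kz Hnu.
  pose proof (proj1 (pnorm_unit nu) (proj1 Hnu)) as Hn.
  set (T := fun t => K (padd zeta (pscal t nu))).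
  assert (T0 : T 0).
  { unfold T. replace (padd zeta (pscal 0 nu)) with zeta; [exact Kz|].
    unfold padd, pscal; destruct zeta; simpl; f_equal; ring. }
  assert (Tle0 : forall t, T t -> t <= 0).
  { intros t Tt. pose proof (proj2 Hnu _ Tt) as Ht.
    replace (dot (psub (padd zeta (pscal t nu)) zeta) nu) with (t * dot nu nu) in Ht
      by (unfold dot, psub, padd, pscal; simpl; ring).
    rewrite Hn in Ht. lra. }
  assert (Tbelow : forall t, T t -> - M - dot zeta nu <= t).
  { intros t Tt. pose proof (dot_unit_le_pnorm (padd zeta (pscal t nu)) nu Hn) as Hd.
    specialize (HM _ Tt).
    replace (dot (padd zeta (pscal t nu)) nu) with (dot zeta nu + t * dot nu nu) in Hd
      by (unfold dot, padd, pscal; simpl; ring).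
    rewrite Hn in Hd. apply Rabs_le_inv in Hd. lra. }
  destruct (glb_exists T _ (ex_intro _ 0 T0) Tbelow) as [m [Hm _]].
  assert (Tm : T m).
  { apply Hcl. intros r Hr. destruct (glb_approx T m r Hm Hr) as [t [Tt Ht]].
    exists (padd zeta (pscal t nu)). split; [exact Tt|].
    assert (m <= t) by (apply Hm; exact Tt).
    replace (padd zeta (pscal t nu)) with (padd (padd zeta (pscal m nu)) (pscal (t - m) nu))
      by (unfold padd, pscal; simpl; f_equal; ring).
    rewrite dist_padd_pscal, (proj1 Hnu), Rabs_right; lra. }
  exists (- m). split.
  - pose proof (proj1 Hm 0 T0). lra.
  - intro t. split.
    + intro Tt. pose proof (proj1 Hm t Tt). pose proof (Tle0 t Tt). lra.
    + intro Ht. apply (convex_line K zeta nu m 0); auto; lra.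
Qed.

(* Smoothness leaves only [nu] and [-nu] as outer normals at [zeta], and [-nu] is excluded
   because the interior point [c] lies strictly on the inner side of each. *)
Lemma smooth_local_depth K c zeta nu h : smooth K -> interior K c -> boundary K zeta ->
  outer_normal K zeta nu -> chord_length K zeta nu h -> local_depth K zeta h.
Proof.
  intros Hsm Hc Hb Hnu Hch. split; [exists nu; auto|].
  intros nu' h' Hnu' [Hh' Hiff']. destruct (Hsm zeta Hb nu' nu Hnu' Hnu) as [-> | ->].
  - assert (Hin : - h <= - h' <= 0) by (apply (proj2 Hch), Hiff'; lra). lra.
  - pose proof (outer_normal_interior_lt0 K c zeta nu Hc Hnu).
    pose proof (outer_normal_interior_lt0 K c zeta _ Hc Hnu').
    unfold dot, pscal in *; simpl in *. lra.
Qed.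

Lemma exists_support_point K u : compact_set K -> (exists z, K z) -> pnorm u = 1 ->
  exists a, K a /\ outer_normal K a u.
Proof.
  intros [Hcl [M HM]] [z0 Kz0] Hu. pose proof (proj1 (pnorm_unit u) Hu) as Hu1.
  set (E := fun x => exists p, K p /\ dot p u = x).
  destruct (completeness E) as [m Hm].
  - exists M. intros x [p [Kp <-]].
    pose proof (Rabs_le_inv _ _ (dot_unit_le_pnorm p u Hu1)). pose proof (HM p Kp). lra.
  - exists (dot z0 u), z0. auto.
  - assert (Hnear : forall n, exists p, K p /\ m - / (INR n + 1) < dot p u).
    { intro n. destruct (lub_approx E m _ Hm (inv_succ_pos n)) as [x [[p [Kp <-]] Hx]].
      eauto. }
    destruct (choice _ Hnear) as [P HP].
    destruct (bounded_pt_seq_cv_reindex P M (fun n => HM _ (proj1 (HP n))))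
      as [phi [a [Hphi Ha]]].
    assert (Hlim : Un_cv (fun k => dot (P (phi k)) u) (dot a u))
      by (apply dot_cv; [exact Ha|apply pt_cv_const]).
    assert (Ham : dot a u = m).
    { apply Rle_antisym.
      - apply (@Rle_cv_lim (fun k => dot (P (phi k)) u) (fun _ => m));
          [|exact Hlim|apply Un_cv_const].
        intro k. apply Hm. exists (P (phi k)). split; [apply HP|reflexivity].
      - replace m with (m - 0) at 1 by ring.
        apply (@Rle_cv_lim (fun k => m - / (INR (phi k) + 1)) (fun k => dot (P (phi k)) u)).
        + intro k. apply Rlt_le, HP.
        + apply CV_minus; [apply Un_cv_const|exact (Un_cv_reindex _ _ _ inv_succ_cv Hphi)].
        + exact Hlim. }
    exists a. split; [exact (closed_set_limit K _ a Hcl (fun k => proj1 (HP (phi k))) Ha)|].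
    split; [exact Hu|]. intros p Kp.
    assert (dot p u <= m) by (apply Hm; exists p; auto).
    replace (dot (psub p a) u) with (dot p u - dot a u) by (unfold dot, psub; simpl; ring).
    lra.
Qed.

Lemma no_vanishing_chords K (Z V : nat -> pt) (H : nat -> R) :
  convex_domain K -> smooth K ->
  (forall n, boundary K (Z n) /\ outer_normal K (Z n) (V n) /\ chord_length K (Z n) (V n) (H n)) ->
  (forall n, H n < / (INR n + 1)) -> False.
Proof.
  intros [[Hcl [M HM]] [Hcv [c Hc]]] Hsm HQ Hsmall.
  assert (KZ : forall n, K (Z n)) by (intro n; apply Hcl, (proj1 (HQ n))).
  assert (HV : forall n, pnorm (V n) <= 1) by (intro n; apply Req_le, HQ).
  destruct (bounded_pt_seq_cv_reindex Z M (fun n => HM _ (KZ n))) as [phi1 [a [Hphi1 Ha]]].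
  destruct (bounded_pt_seq_cv_reindex (fun k => V (phi1 k)) 1 (fun k => HV _))
    as [phi2 [b [Hphi2 Hb]]].
  set (sigma := fun k => phi1 (phi2 k)).
  assert (Hsigma : forall k, (k <= sigma k)%nat).
  { intro k. specialize (Hphi2 k). specialize (Hphi1 (phi2 k)). unfold sigma. lia. }
  assert (HZa : pt_cv (fun k => Z (sigma k)) a) by exact (pt_cv_reindex _ _ _ Ha Hphi2).
  assert (Hab : outer_normal K a b)
    by (apply (outer_normal_limit K (fun k => Z (sigma k)) (fun k => V (sigma k))); auto;
        intro k; apply HQ).
  assert (Hba : boundary K a)
    by exact (outer_normal_boundary K a b (closed_set_limit K _ a Hcl (fun k => KZ _) HZa) Hab).
  destruct (inner_normal_interior K c a b Hcv Hsm Hc Hba Hab) as [s [Hs [rho [Hrho Hball]]]].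
  assert (Hcv' : pt_cv (fun k => padd (Z (sigma k)) (pscal (- s) (V (sigma k))))
                       (padd a (pscal (- s) b)))
    by (apply pt_cv_padd; [|apply pt_cv_pscal]; assumption).
  destruct (pt_cv_dist _ _ rho Hcv' Hrho) as [N1 HN1].
  destruct (inv_succ_small s Hs) as [N2 HN2].
  set (k := max N1 N2).
  assert (Hin : K (padd (Z (sigma k)) (pscal (- s) (V (sigma k))))) by (apply Hball, HN1; lia).
  destruct (HQ (sigma k)) as [_ [_ [_ Hiff]]]. apply Hiff in Hin.
  specialize (Hsmall (sigma k)). specialize (HN2 (sigma k) ltac:(specialize (Hsigma k); lia)).
  lra.
Qed.

Lemma chord_lengths_bounded_below K : convex_domain K -> smooth K ->
  exists delta, 0 < delta /\ forall zeta nu h, boundary K zeta -> outer_normal K zeta nu ->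
    chord_length K zeta nu h -> delta <= h.
Proof.
  intros Hd Hsm. apply NNPP. intro Hno.
  assert (Hseq : forall n, exists q : pt * pt * R,
    (boundary K (fst (fst q)) /\ outer_normal K (fst (fst q)) (snd (fst q)) /\
     chord_length K (fst (fst q)) (snd (fst q)) (snd q)) /\ snd q < / (INR n + 1)).
  { intro n. apply NNPP. intro Hn. apply Hno. exists (/ (INR n + 1)).
    split; [apply inv_succ_pos|]. intros zeta nu h Hb Hnu Hch.
    apply Rnot_lt_le. intro Hlt. apply Hn. exists (zeta, nu, h). auto. }
  destruct (choice _ Hseq) as [Q HQ].
  apply (no_vanishing_chords K (fun n => fst (fst (Q n))) (fun n => snd (fst (Q n)))
           (fun n => snd (Q n)) Hd Hsm); intro n; apply HQ.
Qed.

Theorem corollary1 (K : pt -> Prop) :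
  convex_domain K -> smooth K -> exists d, depth K d /\ 0 < d.
Proof.
  intros Hd Hsm. pose proof Hd as [Hcpt [Hcv [c Hc]]].
  destruct (chord_lengths_bounded_below K Hd Hsm) as [delta [Hdelta Hlow]].
  destruct (exists_support_point K (1, 0) Hcpt (ex_intro _ c (interior_in K c Hc)))
    as [a [Ka Hna]]; [apply pnorm_unit; unfold dot; simpl; ring|].
  destruct (chord_length_exists K a (1, 0) Hcpt Hcv Ka Hna) as [h Hch].
  destruct (glb_exists (fun h => exists zeta, boundary K zeta /\ local_depth K zeta h) delta)
    as [d [Hglb Hle]].
  - exists h, a. pose proof (outer_normal_boundary K a _ Ka Hna) as Hba.
    split; [exact Hba|exact (smooth_local_depth K c a _ h Hsm Hc Hba Hna Hch)].
  - intros x [zeta [Hb [[nu [Hnu Hch']] _]]]. exact (Hlow zeta nu x Hb Hnu Hch').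
  - exists d. split; [exact Hglb|lra].
Qed.
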